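(* Let $C$ be a commutative ring with identity and $\lambda\in C$. Let $\text{Ш}_C(C)$ denote the shuffle Baxter $C$-algebra of weight $\lambda$ on $C$ (equivalently the free Baxter $C$-algebra of weight $\lambda$ on the empty set), and $\widehat{\text{Ш}}_C(C)$ its completion. \begin{enumerate} \item If $C$ is a noetherian $\mathbb{Q}$-algebra, then $\text{Ш}_C(C)$ is a noetherian ring for every $\lambda\in C$. \item If $C$ is a noetherian $\mathbb{Q}$-algebra and if $\lambda =0$, then $\widehat{\text{Ш}}_C(C)$ is a noetherian ring. \item If $C$ is a $\mathbb{Q}$-algebra, $\lambda\in C$ is not a zero divisor and $\cap_{n\in\mathbb{N}}\lambda^n C \neq 0$, then $\widehat{\text{Ш}}_C(C)$ is not a noetherian ring. \item If $C$ is not a $\mathbb{Q}$-algebra, then $\text{Ш}_C(C)$ and $\widehat{\text{Ш}}_C(C)$ are not noetherian rings. \end{enumerate}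
   Context: All rings are commutative with identity. A Baxter $C$-algebra of weight $\lambda$ is a commutative $C$-algebra $R$ with a $C$-linear operator $P$ satisfying $P(x)P(y)=P(xP(y))+P(yP(x))+\lambda P(xy)$. Here $\text{Ш}_C(C)=\bigoplus_{n\in\mathbb{N}} C\,\mathbf{1}^{\otimes (n+1)}$ and its completion $\widehat{\text{Ш}}_C(C)=\prod_{n\in\mathbb{N}} C\,\mathbf{1}^{\otimes (n+1)}$ (completion with respect to the filtration $\mathrm{Fil}^k=\bigoplus_{n\geq k} C\mathbf{1}^{\otimes(n+1)}$), with multiplication determined by $\mathbf{1}^{\otimes (m+1)} \mathbf{1}^{\otimes (n+1)} = \sum_{k=0}^m \binom{m+n-k}{n}\binom{n}{k} \lambda^k \mathbf{1}^{\otimes (m+n+1-k)}$ for $m,n\in\mathbb{N}$, and Baxter operator $P(\mathbf{1}^{\otimes(n+1)})=\mathbf{1}^{\otimes(n+2)}$. *)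

From mathcomp Require Import all_boot all_order all_algebra.
Set Implicit Arguments. Unset Strict Implicit. Unset Printing Implicit Defensive.
Import GRing.Theory.
Local Open Scope ring_scope.

Definition is_ideal_in (T : Type) (S : T -> Prop) (z : T) (add : T -> T -> T)
  (opp : T -> T) (mul : T -> T -> T) (I : T -> Prop) : Prop :=
  [/\ (forall x, I x -> S x), I z,
      (forall x y, I x -> I y -> I (add x y)),
      (forall x, I x -> I (opp x)) &
      (forall r x, S r -> I x -> I (mul r x))].

Definition noetherian_on (T : Type) (S : T -> Prop) (z : T) (add : T -> T -> T)
  (opp : T -> T) (mul : T -> T -> T) : Prop :=
  forall I : nat -> (T -> Prop),
    (forall n, is_ideal_in S z add opp mul (I n)) ->
    (forall n x, I n x -> I n.+1 x) ->
    exists N : nat, forall n, (N <= n)%N -> forall x, I n x -> I N x.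

Definition noetherian_ring (C : comPzRingType) : Prop :=
  noetherian_on (fun _ : C => True) 0 +%R -%R *%R.

Definition is_Q_algebra (C : comPzRingType) : Prop :=
  forall n : nat, exists y : C, (n.+1)%:R * y = 1.

(* Elements of the completion \hat{Ш}_C(C): a : nat -> C stands for
   sum_n a n 1^{\otimes (n+1)}. Ш_C(C) is the subset of finitely supported ones. *)
Section Sha.
Variable C : comPzRingType.
Implicit Types (lam : C) (a b : nat -> C).

Definition sh_zero : nat -> C := fun _ => 0.
Definition sh_add a b : nat -> C := fun n => a n + b n.
Definition sh_opp a : nat -> C := fun n => - a n.
(* 1^{(m+1)} 1^{(n+1)} = sum_{k<=m} C(m+n-k,n) C(n,k) lam^k 1^{(m+n+1-k)},
   extended bilinearly (and continuously for the completion): coefficient at p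
   collects all (m,n,k) with k <= m and m+n-k = p (necessarily m,n <= p). *)
Definition sh_mul lam a b : nat -> C := fun p =>
  \sum_(m < p.+1) \sum_(n < p.+1) \sum_(k < m.+1)
     (if (m + n - k == p)%N
      then a m * b n * ('C(m + n - k, n))%:R * ('C(n, k))%:R * lam ^+ k
      else 0).

Definition sha_carrier (a : nat -> C) : Prop :=
  exists N : nat, forall n, (N <= n)%N -> a n = 0.

Definition sha_noetherian lam : Prop :=
  noetherian_on sha_carrier sh_zero sh_add sh_opp (sh_mul lam).

Definition sha_hat_noetherian lam : Prop :=
  noetherian_on (fun _ => True) sh_zero sh_add sh_opp (sh_mul lam).
End Sha.

From mathcomp Require Import all_boot all_order all_algebra.
From mathcomp Require Import zify ring.
From Stdlib Require Import FunctionalExtensionality ClassicalEpsilon Classical.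
Set Implicit Arguments. Unset Strict Implicit. Unset Printing Implicit Defensive.
Import GRing.Theory.
Local Open Scope ring_scope.

(* Parts (1) and (2) follow Hilbert's basis argument.  In a Q-algebra,
   multiplication by 1^{(2)} turns the leading coefficient of an element of
   degree d (for lam = 0, the lowest coefficient of an element of order d)
   into d + 1 times itself, so the ideals of C formed by these coefficients
   increase with d; for a chain of ideals they also increase along the chain,
   and noetherianity of C makes this double chain stabilise.  An ideal is then
   recovered from its coefficient ideals: by induction on the degree in Ш, and
   in the completion by a convergent series of corrections built from finitely
   many generators.
   (3): the maps chi_t(a) = \sum_(n <= t) C(t, n) lam^n a_n are ring morphisms
   to C, and binomial inversion against an x divisible by every power of lam
   shows that the ideals \bigcap_(t >= K) ker chi_t increase strictly.
   (4): if a prime p is not invertible in C, the ideals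
   {a | p divides a_n whenever p^K divides n} increase strictly; they are ideals
   because p divides C(P, n) whenever p^K divides P but not n. *)

Lemma bin_mul_swap t u n : (n <= u)%N ->
  ('C(t, u) * 'C(u, n) = 'C(t, n) * 'C(t - n, u - n))%N.
Proof.
move=> le_nu; have [le_ut|lt_tu] := leqP u t; last first.
  rewrite bin_small // mul0n; have [le_nt|lt_tn] := leqP n t; last by rewrite bin_small.
  by rewrite (@bin_small (t - n)) ?muln0 //; lia.
have le_nt : (n <= t)%N by lia.
have le_sub : (u - n <= t - n)%N by lia.
have := bin_fact le_sub; rewrite (_ : t - n - (u - n) = t - u)%N; last by lia.
move=> Ftn; have Fut := bin_fact le_ut; have Fun := bin_fact le_nu.
have Fnt := bin_fact le_nt.
have pos : (0 < n`! * (u - n)`! * (t - u)`!)%N by rewrite !muln_gt0 !fact_gt0.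
apply/eqP; rewrite -(eqn_pmul2r pos); apply/eqP.
transitivity ('C(t, u) * ('C(u, n) * (n`! * (u - n)`!)) * (t - u)`!)%N; first ring.
rewrite Fun -mulnA Fut.
transitivity ('C(t, n) * (n`! * ('C(t - n, u - n) * ((u - n)`! * (t - u)`!))))%N;
  last ring.
by rewrite Ftn Fnt.
Qed.

Lemma sum_bin_shuffle t m n :
  (\sum_(k < m.+1) 'C(t, m + n - k) * 'C(m + n - k, n) * 'C(n, k) = 'C(t, m) * 'C(t, n))%N.
Proof.
transitivity ('C(t, n) * \sum_(k < m.+1) 'C(n, k) * 'C(t - n, m - k))%N.
  rewrite big_distrr; apply: eq_bigr => k _ /=; have := ltn_ord k => lt_km.
  rewrite bin_mul_swap; last by lia.
  by rewrite (_ : m + n - k - n = m - k)%N; [ring | lia].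
rewrite binomial.Vandermonde; have [le_nt|lt_tn] := leqP n t; first by rewrite subnKC // mulnC.
by rewrite bin_small // muln0 mul0n.
Qed.

Lemma prime_dvd_bin_pow p K P n : prime p -> (p ^ K %| P)%N -> ~~ (p ^ K %| n)%N ->
  (p %| 'C(P, n))%N.
Proof.
move=> p_pr dvd_P; have [le_nP|lt_Pn] := leqP n P; last by rewrite bin_small.
case: n le_nP => [|n] le_nP; first by rewrite dvdn0.
apply: contraR => ndvd_bin; have cop : coprime (p ^ K) 'C(P, n.+1).
  by rewrite coprimeXl // prime_coprime.
by rewrite -(Gauss_dvdl _ cop) -mul_bin_diag dvdn_mulr.
Qed.

Lemma alt_sum_bin (R : comPzRingType) s : (0 < s)%N ->
  \sum_(j < s.+1) (-1) ^+ j * ('C(s, j))%:R = 0 :> R.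
Proof.
move=> s_gt0; have := exprBn (1 : R) 1 s; rewrite subrr expr0n gtn_eqF // => E.
rewrite [RHS](_ : 0 = false%:R) // E.
by apply: eq_bigr => j _; rewrite !expr1n !mulr1 mulr_natr.
Qed.

Lemma chain_le (T : Type) (I : nat -> T -> Prop) : (forall n x, I n x -> I n.+1 x) ->
  forall m n x, (m <= n)%N -> I m x -> I n x.
Proof. by move=> incr m n x /subnK <-; elim: (n - m)%N => // k IH /IH; apply: incr. Qed.

Section NoetherianRing.
Variable C : comPzRingType.

Definition ring_ideal (J : C -> Prop) := is_ideal_in (fun _ : C => True) 0 +%R -%R *%R J.

Lemma noetherian_grid_stable (L : nat -> nat -> C -> Prop) : noetherian_ring C ->
  (forall d n, ring_ideal (L d n)) ->
  (forall d n c, L d n c -> L d.+1 n c) -> (forall d n c, L d n c -> L d n.+1 c) ->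
  exists N D, (forall n d c, (N <= n)%N -> L d n c -> L d N c) /\
              (forall d c, (D <= d)%N -> L d N c -> L D N c).
Proof.
move=> noeC idL incr_d incr_n.
have mono d d' n n' c : (d <= d')%N -> (n <= n')%N -> L d n c -> L d' n' c.
  move=> le_d le_n /(chain_le (incr_n d) le_n).
  exact: (chain_le (I := fun k => L k n') (fun k => incr_d k n') le_d).
have [D stabD] := noeC (fun n => L n n) (fun n => idL n n)
  (fun n c => mono n n.+1 n n.+1 c (leqnSn n) (leqnSn n)).
have toD d n c : (D <= d)%N -> L d n c -> L D D c.
  move=> le_Dd Ldn; apply: (stabD (maxn d n)); first by lia.
  by apply: mono Ldn; rewrite ?leq_maxl ?leq_maxr.
have [M stabM] : exists M, forall d n c, (d < D)%N -> (M <= n)%N -> L d n c -> L d M c.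
  elim: D {stabD toD} => [|D [M stabM]]; first by exists 0%N.
  have [M' stabM'] := noeC (L D) (idL D) (incr_n D).
  exists (maxn M M') => d n c lt_dD le_n Ldn.
  have [lt_d|ge_d] := ltnP d D.
    by apply: (mono d d M) (stabM d n c lt_d _ Ldn); rewrite ?leq_maxl //; lia.
  have eq_dD : d = D by lia.
  subst d; apply: (mono D D M'); rewrite ?leq_maxr //.
  by apply: (stabM' n) => //; lia.
exists (maxn M D), D; split=> [n d c le_n Ldn|d c le_Dd /(toD _ _ _ le_Dd)]; last first.
  by apply: mono; rewrite ?leq_maxr.
have [lt_dD|le_Dd] := ltnP d D.
  by apply: (mono d d M); rewrite ?leq_maxl //; apply: stabM Ldn => //; lia.
by apply: (mono D d D) (toD d n c le_Dd Ldn); rewrite ?leq_maxr.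
Qed.

Definition ideal_span (cs : seq C) (c : C) :=
  exists w : nat -> C, c = \sum_(i < size cs) w i * cs`_i.

Lemma ideal_span_ideal cs : ring_ideal (ideal_span cs).
Proof.
split=> //.
- by exists (fun=> 0); rewrite big1 // => i _; rewrite mul0r.
- move=> _ _ [u ->] [v ->]; exists (fun i => u i + v i).
  by rewrite -big_split; apply: eq_bigr => i _; rewrite mulrDl.
- move=> _ [u ->]; exists (fun i => - u i).
  by rewrite -sumrN; apply: eq_bigr => i _; rewrite mulNr.
- move=> r _ _ [u ->]; exists (fun i => r * u i).
  by rewrite mulr_sumr; apply: eq_bigr => i _; rewrite mulrA.
Qed.

Lemma ideal_span_rcons cs x c : ideal_span cs c -> ideal_span (rcons cs x) c.
Proof.
move=> [u ->]; exists (fun i => if (i < size cs)%N then u i else 0).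
rewrite size_rcons big_ord_recr /= ltnn mul0r addr0.
by apply: eq_bigr => i _; rewrite ltn_ord nth_rcons ltn_ord.
Qed.

Lemma ideal_span_rcons_last cs x : ideal_span (rcons cs x) x.
Proof.
exists (fun i => (i == size cs)%:R).
rewrite size_rcons big_ord_recr /= eqxx mul1r nth_rcons ltnn eqxx big1 ?add0r //.
by move=> i _; rewrite ltn_eqF ?mul0r.
Qed.

Lemma noetherian_ideal_fg J : noetherian_ring C -> ring_ideal J ->
  exists cs, (forall c, c \in cs -> J c) /\ (forall c, J c -> ideal_span cs c).
Proof.
move=> noeC idJ; apply: NNPP => not_fg.
have [next nextP] : exists next : seq C -> C, forall cs,
    (forall c, c \in cs -> J c) -> J (next cs) /\ ~ ideal_span cs (next cs).
  apply: (choice (fun cs c => (forall x, x \in cs -> J x) -> J c /\ ~ ideal_span cs c)) => cs.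
  have [inJ|notJ] := classic (forall c, c \in cs -> J c); last by exists 0 => /notJ.
  apply: NNPP => no_next; apply: not_fg; exists cs; split=> // c Jc.
  by apply: NNPP => ncs; apply: no_next; exists c.
pose fix gens k := if k is k'.+1 then rcons (gens k') (next (gens k')) else [::].
have gensJ k c : c \in gens k -> J c.
  elim: k c => [|k IH] c //=; rewrite mem_rcons in_cons => /orP[/eqP ->|/IH //].
  exact: (nextP _ IH).1.
have [N stabN] := noeC (fun k => ideal_span (gens k)) (fun k => ideal_span_ideal _)
  (fun k => ideal_span_rcons (next (gens k))).
apply: (nextP _ (gensJ N)).2; apply: (stabN N.+1) => //.
exact: ideal_span_rcons_last.
Qed.

Lemma principal_ideal (x : C) : ring_ideal (fun c => exists z, c = x * z).
Proof.
split=> //; first by exists 0; rewrite mulr0.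
- by move=> _ _ [u ->] [v ->]; exists (u + v); rewrite mulrDr.
- by move=> _ [u ->]; exists (- u); rewrite mulrN.
- by move=> r _ _ [u ->]; exists (r * u); rewrite mulrCA.
Qed.

Lemma Q_algebra_natr_inv : is_Q_algebra C -> forall k : nat, (0 < k)%N ->
  exists y : C, k%:R * y = 1.
Proof. by move=> QC [//|k] _; apply: QC. Qed.

Lemma Q_algebra_ideal_natr J n c : is_Q_algebra C -> ring_ideal J ->
  J (n.+1%:R * c) -> J c.
Proof.
move=> QC [_ _ _ _ Jmul]; have [y ny1] := QC n.
by move/(Jmul y _ I); rewrite mulrA (mulrC y) ny1 mul1r.
Qed.

Lemma not_Q_algebra_prime : ~ is_Q_algebra C ->
  exists2 p, prime p & forall y : C, p%:R * y <> 1.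
Proof.
move=> notQ; apply: NNPP => no_p; apply: notQ.
have prime_inv p : prime p -> exists y : C, p%:R * y = 1.
  move=> p_pr; apply: NNPP => no_y; apply: no_p; exists p => // y py1.
  by apply: no_y; exists y.
suff inv k : (0 < k)%N -> exists y : C, k%:R * y = 1 by move=> n; apply: inv.
elim/ltn_ind: k => k IH k_gt0; have [k_gt1|] := ltnP 1 k; last first.
  by move=> k_le1; exists 1; rewrite (_ : k = 1)%N ?mulr1 //; lia.
have [p_pr p_dvd] := (pdiv_prime k_gt1, pdiv_dvd k).
have [y py1] := prime_inv _ p_pr.
have [||z qz1] := IH (k %/ pdiv k)%N.
- exact: ltn_Pdiv (prime_gt1 p_pr) k_gt0.
- by rewrite divn_gt0 ?(prime_gt0 p_pr) ?(dvdn_leq k_gt0 p_dvd).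
exists (y * z); rewrite -{1}(divnK p_dvd) natrM.
by rewrite [y * z]mulrC mulrACA qz1 py1 mulr1.
Qed.

End NoetherianRing.

Lemma sumr_ord_single (R : nmodType) n (d : 'I_n) (F : 'I_n -> R) :
  (forall i : 'I_n, (i : nat) != d -> F i = 0) -> \sum_(i < n) F i = F d.
Proof. by move=> F0; rewrite (big_only1 d) // => i ne_id _; apply: F0. Qed.
Arguments sumr_ord_single {R n} d [F].

Lemma sumr_ord_widen (R : nmodType) n1 n2 (le_n12 : (n1 <= n2)%N) (F : 'I_n2 -> R) :
  (forall i : 'I_n2, (n1 <= i)%N -> F i = 0) ->
  \sum_(i < n2) F i = \sum_(i < n1) F (widen_ord le_n12 i).
Proof.
move=> F0; rewrite (bigID (fun i : 'I_n2 => (i < n1)%N)) /= -big_ord_narrow.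
by rewrite [X in _ + X]big1 ?addr0 // => i; rewrite -leqNgt; apply: F0.
Qed.

Section ShuffleProduct.
Variable C : comPzRingType.
Implicit Types (lam c r : C) (a b : nat -> C).

Definition sh_mon (t : nat) c : nat -> C := fun n => if n == t then c else 0.

Definition sh_scale c a : nat -> C := fun n => c * a n.

Definition sh_ideal lam (S I : (nat -> C) -> Prop) :=
  is_ideal_in S (sh_zero C) (@sh_add C) (@sh_opp C) (sh_mul lam) I.

(* [1^{(m+1)} 1^{(n+1)} = \sum_P sh_struct lam m n P 1^{(P+1)}] *)
Definition sh_struct lam m n P : C := \sum_(k < m.+1)
  if (m + n - k == P)%N then 'C(m + n - k, n)%:R * 'C(n, k)%:R * lam ^+ k else 0.

Lemma sh_struct_eq0 lam m n P : [\/ (P < m)%N, (P < n)%N | (m + n < P)%N] ->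
  sh_struct lam m n P = 0.
Proof.
move=> out; apply: big1 => k _; case: eqP => // def_P; have lt_km := ltn_ord k.
case: out => [lt_Pm|lt_Pn|lt_mnP]; last by lia.
  by rewrite (@bin_small n k) ?mulr0 ?mul0r //; lia.
by rewrite def_P bin_small ?mul0r.
Qed.

Lemma sh_struct_top lam m n : sh_struct lam m n (m + n) = 'C(m + n, n)%:R.
Proof.
rewrite /sh_struct (sumr_ord_single ord0) => [|k k_neq0]; first by rewrite subn0 eqxx bin0 !mulr1.
have k_gt0 : (0 < k)%N by rewrite lt0n.
by case: eqP => // E; have := ltn_ord k; lia.
Qed.

Lemma sh_struct0n lam n P : sh_struct lam 0 n P = (n == P)%:R.
Proof. by rewrite /sh_struct big_ord1 subn0; case: eqP; rewrite ?binn ?bin0 ?mulr1. Qed.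

Lemma sh_struct0 m n P :
  sh_struct 0 m n P = if (m + n == P)%N then 'C(m + n, n)%:R else 0.
Proof.
rewrite /sh_struct (sumr_ord_single ord0) => [|k k_neq0]; first by rewrite subn0 bin0 !mulr1.
by rewrite expr0n (negbTE k_neq0) mulr0 if_same.
Qed.

Lemma sh_mulE lam a b T P : (P <= T)%N ->
  sh_mul lam a b P = \sum_(m < T.+1) \sum_(n < T.+1) a m * b n * sh_struct lam m n P.
Proof.
rewrite -ltnS => le_PT; symmetry.
rewrite (sumr_ord_widen le_PT) => [|m lt_Pm]; last first.
  by rewrite big1 // => n _; rewrite sh_struct_eq0 ?mulr0 //; apply: Or31.
apply: eq_bigr => m _; rewrite (sumr_ord_widen le_PT) => [|n lt_Pn]; last first.
  by rewrite sh_struct_eq0 ?mulr0 //; apply: Or32.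
apply: eq_bigr => n _; rewrite /sh_struct mulr_sumr; apply: eq_bigr => k _ /=.
by case: eqP; rewrite ?mulr0 // !mulrA.
Qed.

Lemma sh_mul_top lam a b d e :
  (forall j, (d < j)%N -> a j = 0) -> (forall j, (e < j)%N -> b j = 0) ->
  (forall P, (d + e < P)%N -> sh_mul lam a b P = 0) /\
  sh_mul lam a b (d + e) = 'C(d + e, e)%:R * (a d * b e).
Proof.
move=> a0 b0; have term0 m n P : (d + e <= P)%N -> (m != d) || (n != e) || (d + e < P)%N ->
    a m * b n * sh_struct lam m n P = 0.
  move=> le_P ne; have [lt_dm|le_md] := ltnP d m; first by rewrite a0 ?mul0r.
  have [lt_en|le_ne] := ltnP e n; first by rewrite b0 ?mulr0 ?mul0r.
  by rewrite sh_struct_eq0 ?mulr0 //; apply: Or33; lia.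
split=> [P lt_P|].
  rewrite (sh_mulE _ _ _ (leqnn P)); apply: big1 => m _; apply: big1 => n _.
  by rewrite term0 ?lt_P ?orbT // ltnW.
have [lt_d lt_e] : (d < (d + e).+1)%N /\ (e < (d + e).+1)%N by split; lia.
rewrite (sh_mulE _ _ _ (leqnn _)) (sumr_ord_single (Ordinal lt_d)) => [|m ne_md]; last first.
  by rewrite big1 // => n _; rewrite term0 ?ne_md.
rewrite (sumr_ord_single (Ordinal lt_e)) => [|n ne_ne]; last by rewrite term0 ?ne_ne ?orbT.
by rewrite sh_struct_top mulrC.
Qed.

Lemma sh_mul_monl lam t c b T P : (t <= T)%N -> (P <= T)%N ->
  sh_mul lam (sh_mon t c) b P = \sum_(n < T.+1) c * b n * sh_struct lam t n P.
Proof.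
rewrite -ltnS => lt_tT le_PT; rewrite (sh_mulE _ _ _ le_PT).
rewrite (sumr_ord_single (Ordinal lt_tT)) => [|m /negbTE ne_mt]; first by rewrite /sh_mon eqxx.
by rewrite big1 // => n _; rewrite /sh_mon ne_mt !mul0r.
Qed.

Lemma sh_mul_mon0 lam c a : sh_mul lam (sh_mon 0 c) a = sh_scale c a.
Proof.
apply: functional_extensionality => P; rewrite (sh_mul_monl _ _ _ (leq0n P) (leqnn P)).
rewrite (sumr_ord_single ord_max) => [|n ne_nP]; first by rewrite sh_struct0n eqxx mulr1.
by rewrite sh_struct0n (negbTE ne_nP) mulr0.
Qed.

Lemma sh_ideal_scale lam S I c a : sh_ideal lam S I -> S (sh_mon 0 c) ->
  I a -> I (sh_scale c a).
Proof. by move=> [_ _ _ _ Imul] Sc /(Imul _ _ Sc); rewrite sh_mul_mon0. Qed.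

Lemma sh_ideal_sum lam S I K (F : 'I_K -> nat -> C) : sh_ideal lam S I ->
  (forall i, I (F i)) -> I (fun P => \sum_(i < K) F i P).
Proof.
move=> [_ I0 Iadd _ _]; elim: K F => [|K IH] F IF.
  by congr I: I0; apply: functional_extensionality => P; rewrite big_ord0.
have -> : (fun P => \sum_(i < K.+1) F i P)
    = sh_add (fun P => \sum_(i < K) F (widen_ord (leqnSn K) i) P) (F ord_max).
  by apply: functional_extensionality => P; rewrite big_ord_recr.
by apply: Iadd; [apply: IH | apply: IF].
Qed.

Lemma sh_ideal_of_sub lam S I f g : sh_ideal lam S I ->
  I g -> I (sh_add f (sh_opp g)) -> I f.
Proof.
move=> [_ _ Iadd _ _] Ig /Iadd /(_ Ig).
congr I; apply: functional_extensionality => n; exact: subrK.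
Qed.

Lemma sha_carrier_mon t c : sha_carrier (sh_mon t c).
Proof. by exists t.+1 => n lt_tn; rewrite /sh_mon ifN // neq_ltn lt_tn orbT. Qed.

Lemma sha_carrier_mul lam a b : sha_carrier a -> sha_carrier b ->
  sha_carrier (sh_mul lam a b).
Proof.
move=> [N a0] [M b0]; exists (N + M).+1 => P lt_P.
have [top0 _] := sh_mul_top lam (fun j lt_j => a0 j (ltnW lt_j)) (fun j lt_j => b0 j (ltnW lt_j)).
exact: top0.
Qed.

Definition coefs (I : (nat -> C) -> Prop) (V : pred nat) d c :=
  exists a, [/\ I a, a d = c & forall j, V j -> a j = 0].

Lemma coefs_ideal lam S I V d : sh_ideal lam S I -> (forall c, S (sh_mon 0 c)) ->
  ring_ideal (coefs I V d).
Proof.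
move=> idI S0; have [_ I0 Iadd Iopp _] := idI; split=> //.
- by exists (sh_zero C).
- move=> _ _ [a [Ia <- a0]] [b [Ib <- b0]]; exists (sh_add a b).
  by split=> [|//|j Vj]; [apply: Iadd | rewrite /sh_add a0 ?b0 ?addr0].
- move=> _ [a [Ia <- a0]]; exists (sh_opp a).
  by split=> [|//|j Vj]; [apply: Iopp | rewrite /sh_opp a0 ?oppr0].
- move=> r _ _ [a [Ia <- a0]]; exists (sh_scale r a).
  by split=> [|//|j Vj]; [exact: sh_ideal_scale idI (S0 r) Ia | rewrite /sh_scale a0 ?mulr0].
Qed.

End ShuffleProduct.

Section NotQAlgebra.
Variables (C : comPzRingType) (lam : C) (p : nat).
Hypothesis p_pr : prime p.

Let pC (c : C) := exists z, c = p%:R * z.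

(* Either p^K divides the degree of the second factor, or p divides the
   binomial coefficient C(P, n) of the structure constant. *)
Lemma sh_mul_pdiv K a b : (forall n, (p ^ K %| n)%N -> pC (b n)) ->
  forall P, (p ^ K %| P)%N -> pC (sh_mul lam a b P).
Proof.
have [_ p0 pD _ pM] := principal_ideal (p%:R : C).
have pMr x y : pC x -> pC (x * y).
  by rewrite mulrC; apply: pM.
move=> pb P dvd_P; apply: big_ind => [//|x y|m _]; first exact: pD.
apply: big_ind => [//|x y|n _]; first exact: pD.
apply: big_ind => [//|x y|k _]; first exact: pD.
case: eqP => [def_P|_ //]; have [dvd_n|ndvd_n] := boolP (p ^ K %| n)%N.
  by apply/pMr/pMr/pMr; apply: (pM _ _ I (pb n dvd_n)).
have /dvdnP[q ->] : (p %| 'C(m + n - k, n))%N.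
  by apply: prime_dvd_bin_pow ndvd_n; rewrite ?def_P.
by apply/pMr/pMr; rewrite natrM; apply: (pM _ _ I); exists q%:R; rewrite mulrC.
Qed.

Lemma sh_not_noetherian_of_prime (S : (nat -> C) -> Prop) :
  (forall y : C, p%:R * y <> 1) ->
  S (sh_zero C) -> (forall a b, S a -> S b -> S (sh_add a b)) ->
  (forall a, S a -> S (sh_opp a)) -> (forall a b, S a -> S b -> S (sh_mul lam a b)) ->
  (forall j, S (sh_mon j 1)) ->
  ~ noetherian_on S (sh_zero C) (@sh_add C) (@sh_opp C) (sh_mul lam).
Proof.
move=> p_not_inv S0 Sadd Sopp Smul Smon noeS.
have [_ p0 pD pN _] := principal_ideal (p%:R : C).
pose I K a := S a /\ forall n, (p ^ K %| n)%N -> pC (a n).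
have idI K : sh_ideal lam S (I K).
  split=> [a []//|//|a b [Sa pa] [Sb pb]|a [Sa pa]|r a Sr [Sa pa]].
  - by split=> [|n dvd_n]; [exact: Sadd | apply: pD; [apply: pa | apply: pb]].
  - by split=> [|n dvd_n]; [exact: Sopp | apply: pN; apply: pa].
  - by split=> [|n]; [exact: Smul | apply: sh_mul_pdiv].
have incrI K a : I K a -> I K.+1 a.
  move=> [Sa pa]; split=> // n dvd_n; apply: pa.
  exact: dvdn_trans (dvdn_exp2l p (leqnSn K)) dvd_n.
have [N stabN] := noeS I idI incrI.
have /stabN[//|_ /(_ (p ^ N)%N (dvdnn _))] : I N.+1 (sh_mon (p ^ N) 1).
  split=> // n dvd_n; rewrite /sh_mon; case: eqP => [def_n|_]; last exact: p0.
  have pN_gt0 : (0 < p ^ N)%N by rewrite expn_gt0 prime_gt0.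
  move: dvd_n; rewrite def_n => /(dvdn_leq pN_gt0).
  by rewrite leqNgt ltn_exp2l ?prime_gt1 // ltnSn.
by rewrite /sh_mon eqxx => -[z /esym/p_not_inv].
Qed.

End NotQAlgebra.

Lemma sha_not_noetherian (C : comPzRingType) (lam : C) : ~ is_Q_algebra C ->
  ~ sha_noetherian lam /\ ~ sha_hat_noetherian lam.
Proof.
move=> /not_Q_algebra_prime[p p_pr p_not_inv]; split.
  apply: (sh_not_noetherian_of_prime p_pr p_not_inv) => [|a b [N a0] [M b0]|a [N a0]||].
  - by exists 0%N.
  - by exists (maxn N M) => n; rewrite geq_max /sh_add => /andP[/a0 -> /b0 ->]; rewrite addr0.
  - by exists N => n /a0; rewrite /sh_opp => ->; rewrite oppr0.
  - exact: sha_carrier_mul.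
  - by move=> j; apply: sha_carrier_mon.
exact: (sh_not_noetherian_of_prime p_pr p_not_inv).
Qed.

Lemma sum_bin_inversion (R : comPzRingType) t K :
  \sum_(n < t.+1) (-1) ^+ (n - K) * ('C(t, n) * 'C(n, K))%:R = (t == K)%:R :> R.
Proof.
have [lt_tK|le_Kt] := ltnP t K.
  rewrite big1 ?ltn_eqF // => n _.
  by rewrite (@bin_small n) ?muln0 ?mulr0 //; apply: leq_ltn_trans lt_tK; rewrite -ltnS.
pose F n : R := (-1) ^+ (n - K) * ('C(t, n) * 'C(n, K))%:R.
rewrite -(big_mkord xpredT F) (@big_cat_nat _ _ _ K) //=; last by lia.
rewrite big_nat_cond big1 ?add0r => [|n /andP[/andP[_ lt_nK] _]]; last first.
  by rewrite /F (bin_small lt_nK) muln0 mulr0.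
rewrite -{1}(add0n K) big_addn (_ : t.+1 - K = (t - K).+1)%N; last by lia.
rewrite big_mkord /F; under eq_bigr => j _ do
  rewrite addnK bin_mul_swap ?leq_addl // addnK natrM mulrCA.
rewrite -mulr_sumr; have [->|ne_tK] := eqVneq t K.
  by rewrite subnn big_ord1 binn expr0 !mulr1.
by rewrite alt_sum_bin ?mulr0 // subn_gt0 ltn_neqAle eq_sym ne_tK le_Kt.
Qed.

Section Characters.
Variables (C : comPzRingType) (lam : C).

Definition sh_chi t (a : nat -> C) := \sum_(n < t.+1) lam ^+ n * 'C(t, n)%:R * a n.

Lemma sh_chi_struct t m n :
  \sum_(P < t.+1) lam ^+ P * 'C(t, P)%:R * sh_struct lam m n P
  = lam ^+ (m + n) * ('C(t, m) * 'C(t, n))%:R.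
Proof.
transitivity (\sum_(P < t.+1) \sum_(k < m.+1) if (m + n - k == P)%N then
   lam ^+ (m + n) * ('C(t, m + n - k) * 'C(m + n - k, n) * 'C(n, k))%:R else 0).
  apply: eq_bigr => P _; rewrite /sh_struct mulr_sumr; apply: eq_bigr => k _.
  case: eqP => [<-|_]; last by rewrite mulr0.
  have le_k : (k <= m + n)%N by have := ltn_ord k; lia.
  by rewrite -(subnK le_k) exprD subnK // !natrM; ring.
rewrite exchange_big /= -sum_bin_shuffle natr_sum mulr_sumr; apply: eq_bigr => k _.
have [le_t|lt_t] := leqP (m + n - k) t; last first.
  rewrite (bin_small lt_t) !mul0n mulr0 big1 // => P _.
  by case: eqP => // def_P; have := ltn_ord P; lia.
rewrite -ltnS in le_t; rewrite (sumr_ord_single (Ordinal le_t)) /= ?eqxx // => P ne_P.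
by rewrite eq_sym (negbTE ne_P).
Qed.

Lemma sh_chiM t a b : sh_chi t (sh_mul lam a b) = sh_chi t a * sh_chi t b.
Proof.
rewrite /sh_chi; transitivity (\sum_(P < t.+1) \sum_(m < t.+1) \sum_(n < t.+1)
    lam ^+ P * 'C(t, P)%:R * (a m * b n * sh_struct lam m n P)).
  apply: eq_bigr => P _; rewrite (sh_mulE (T := t) _ _ _ (ltn_ord P)) mulr_sumr.
  by apply: eq_bigr => m _; rewrite mulr_sumr.
rewrite exchange_big big_distrl; apply: eq_bigr => m _ /=.
rewrite exchange_big big_distrr; apply: eq_bigr => n _ /=.
transitivity (a m * b n * \sum_(P < t.+1) lam ^+ P * 'C(t, P)%:R * sh_struct lam m n P).
  by rewrite mulr_sumr; apply: eq_bigr => P _; ring.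
by rewrite sh_chi_struct natrM exprD; ring.
Qed.

Lemma sh_chiD t a b : sh_chi t (sh_add a b) = sh_chi t a + sh_chi t b.
Proof. by rewrite /sh_chi -big_split; apply: eq_bigr => n _; rewrite /sh_add mulrDr. Qed.

Lemma sh_chiN t a : sh_chi t (sh_opp a) = - sh_chi t a.
Proof. by rewrite /sh_chi -sumrN; apply: eq_bigr => n _; rewrite /sh_opp mulrN. Qed.

Lemma sh_chi0 t : sh_chi t (sh_zero C) = 0.
Proof. by rewrite /sh_chi big1 // => n _; rewrite /sh_zero mulr0. Qed.

Definition sh_peak (y : nat -> C) K : nat -> C :=
  fun n => (-1) ^+ (n - K) * 'C(n, K)%:R * y n.

Lemma sh_chi_peak x y K t : (forall n, x = lam ^+ n * y n) ->
  sh_chi t (sh_peak y K) = x * (t == K)%:R.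
Proof.
move=> xE; rewrite /sh_chi -sum_bin_inversion mulr_sumr; apply: eq_bigr => n _.
by rewrite /sh_peak [x](xE n) natrM; ring.
Qed.

Lemma sha_hat_not_noetherian :
  (exists2 x : C, x != 0 & forall n, exists y, x = lam ^+ n * y) ->
  ~ sha_hat_noetherian lam.
Proof.
move=> [x x_neq0 /choice[y xE]] noeC.
pose I K a := forall t, (K <= t)%N -> sh_chi t a = 0.
have idI K : sh_ideal lam (fun=> True) (I K).
  split=> // [t _|a b Ia Ib t le_t|a Ia t le_t|r a _ Ia t le_t]; first exact: sh_chi0.
  - by rewrite sh_chiD Ia ?Ib ?addr0.
  - by rewrite sh_chiN Ia ?oppr0.
  - by rewrite sh_chiM Ia ?mulr0.
have incrI K a : I K a -> I K.+1 a by move=> Ia t /ltnW; apply: Ia.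
have [N stabN] := noeC I idI incrI.
have peakI : I N.+1 (sh_peak y N) by move=> t lt_Nt; rewrite (sh_chi_peak _ _ xE) gtn_eqF ?mulr0.
move: (stabN N.+1 (leqnSn N) _ peakI N (leqnn N)).
by rewrite (sh_chi_peak _ _ xE) eqxx mulr1; apply/eqP.
Qed.

End Characters.

Section ShaNoetherian.
Variables (C : comPzRingType) (lam : C).
Hypothesis QC : is_Q_algebra C.
Implicit Types I J : (nat -> C) -> Prop.

Definition lead_coefs I d := coefs I (fun j => d < j)%N d.

Lemma lead_coefs_ideal I d : sh_ideal lam (@sha_carrier C) I -> ring_ideal (lead_coefs I d).
Proof. by move=> idI; apply: coefs_ideal idI _ => c; apply: sha_carrier_mon. Qed.

Lemma lead_coefs_succ I d c : sh_ideal lam (@sha_carrier C) I ->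
  lead_coefs I d c -> lead_coefs I d.+1 c.
Proof.
move=> idI [a [Ia <- a0]]; apply: (Q_algebra_ideal_natr QC (lead_coefs_ideal d.+1 idI)).
have mon0 j : (1 < j)%N -> sh_mon 1 (1 : C) j = 0 by move=> lt_1j; rewrite /sh_mon gtn_eqF.
have [top0 topE] := sh_mul_top lam mon0 a0; have [_ _ _ _ Imul] := idI.
exists (sh_mul lam (sh_mon 1 1) a); split; first exact: Imul (sha_carrier_mon _ _) Ia.
  by rewrite topE add1n binSn /sh_mon eqxx mul1r.
by move=> j; rewrite -add1n; apply: top0.
Qed.

Lemma sha_ideal_sub_of_lead I J :
  sh_ideal lam (@sha_carrier C) I -> sh_ideal lam (@sha_carrier C) J ->
  (forall a, I a -> J a) -> (forall d c, lead_coefs J d c -> lead_coefs I d c) ->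
  forall a, J a -> I a.
Proof.
move=> idI idJ subIJ sub_lead; have [carJ _ Jadd Jopp _] := idJ.
suff memI d f : J f -> (forall j, (d <= j)%N -> f j = 0) -> I f.
  by move=> a Ja; have [N a0] := carJ a Ja; apply: memI Ja a0.
elim: d f => [|d IH] f Jf f0.
  have [_ I0 _ _ _] := idI; congr I: I0.
  by apply: functional_extensionality => j; rewrite f0.
have [g [Ig gd g0]] : lead_coefs I d (f d).
  by apply: sub_lead; exists f; split=> // j lt_dj; apply: f0.
apply: (sh_ideal_of_sub idI Ig (IH _ _ _)) => [|j le_dj].
  exact: Jadd Jf (Jopp _ (subIJ _ Ig)).
have [lt_dj|] := ltnP d j; first by rewrite /sh_add /sh_opp f0 ?g0 ?subrr.
by move=> le_jd; rewrite (_ : j = d) 1?/sh_add /sh_opp ?gd ?subrr //; lia.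
Qed.

Lemma sha_noetherian_of_Q : noetherian_ring C -> sha_noetherian lam.
Proof.
move=> noeC Is idIs incrIs.
have lead_incr d n c : lead_coefs (Is n) d c -> lead_coefs (Is n.+1) d c.
  by move=> [a [Ia ad a0]]; exists a; split=> //; apply: incrIs.
have [N [_ [stab _]]] := noetherian_grid_stable noeC
  (fun d n => lead_coefs_ideal d (idIs n)) (fun d n c => lead_coefs_succ (idIs n)) lead_incr.
exists N => n le_Nn; apply: sha_ideal_sub_of_lead (idIs N) (idIs n) _ _ => [a|d c].
  exact: chain_le incrIs _ _ _ le_Nn.
exact: stab.
Qed.

End ShaNoetherian.

Section ShaHatNoetherian.
Variable C : comPzRingType.
Hypothesis QC : is_Q_algebra C.
Implicit Types (I J : (nat -> C) -> Prop) (a b f : nat -> C).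

Local Notation hat_ideal := (sh_ideal 0 (fun _ : nat -> C => True)).

Lemma sh_mul0E a b P : sh_mul 0 a b P = \sum_(m < P.+1) a m * b (P - m)%N * 'C(P, m)%:R.
Proof.
rewrite (sh_mulE _ _ _ (leqnn P)); apply: eq_bigr => m _.
have lt_Pm : (P - m < P.+1)%N by rewrite ltnS leq_subr.
rewrite (sumr_ord_single (Ordinal lt_Pm)) => [|n ne_n] /=; last first.
  rewrite sh_struct0 ifN ?mulr0 //; apply: contra ne_n => /eqP def_P /=.
  by apply/eqP; lia.
have le_mP : (m <= P)%N := ltn_ord m.
by rewrite sh_struct0 subnKC // eqxx bin_sub.
Qed.

Lemma sh_mul0_monl t c b P : sh_mul 0 (sh_mon t c) b P =
  if (t <= P)%N then c * b (P - t)%N * 'C(P, t)%:R else 0.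
Proof.
rewrite sh_mul0E; case: ifPn => [le_tP|]; last first.
  rewrite -ltnNge => lt_Pt; apply: big1 => m _; rewrite /sh_mon ifN ?mul0r //.
  by rewrite neq_ltn (leq_trans (ltn_ord m)).
rewrite -ltnS in le_tP; rewrite (sumr_ord_single (Ordinal le_tP)) /= ?/sh_mon ?eqxx //.
by move=> m /negbTE ->; rewrite !mul0r.
Qed.

Definition low_coefs I d := coefs I (fun j => j < d)%N d.

Lemma low_coefs_ideal I d : hat_ideal I -> ring_ideal (low_coefs I d).
Proof. by move=> idI; apply: coefs_ideal idI _. Qed.

Lemma low_coefs_succ I d c : hat_ideal I -> low_coefs I d c -> low_coefs I d.+1 c.
Proof.
move=> idI [a [Ia <- a0]]; apply: (Q_algebra_ideal_natr QC (low_coefs_ideal d.+1 idI)).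
have [_ _ _ _ Imul] := idI.
exists (sh_mul 0 (sh_mon 1 1) a); split; first exact: Imul.
  by rewrite sh_mul0_monl subn1 bin1 mul1r mulrC.
move=> j lt_jd; rewrite sh_mul0_monl; case: ifPn => // le_1j.
by rewrite a0 ?mulr0 ?mul0r //; lia.
Qed.

Lemma low_approx I J : hat_ideal I -> hat_ideal J -> (forall a, I a -> J a) ->
  (forall d c, low_coefs J d c -> low_coefs I d c) ->
  forall D f, J f -> exists2 g, I g & forall j, (j < D)%N -> f j = g j.
Proof.
move=> idI [_ _ Jadd Jopp _] subIJ sub_low; have [_ I0 Iadd _ _] := idI.
elim=> [|D IH] f Jf; first by exists (sh_zero C).
have [g Ig fg] := IH f Jf.
have [h [Ih hD h0]] : low_coefs I D (f D - g D).
  apply: sub_low; exists (sh_add f (sh_opp g)); split=> //.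
    exact: Jadd Jf (Jopp _ (subIJ _ Ig)).
  by move=> j /fg; rewrite /sh_add /sh_opp => ->; rewrite subrr.
exists (sh_add g h); first exact: Iadd.
move=> j; rewrite ltnS leq_eqVlt /sh_add => /orP[/eqP ->|/[dup] /fg -> /h0 ->].
  by rewrite hD addrC subrK.
by rewrite addr0.
Qed.

(* Each correction step [t] has order at least [t], so the corrections sum up
   coefficientwise to a finite combination of the [g i] with series coefficients. *)
Lemma sh_mul0_series K (g : nat -> nat -> C) (Q : nat -> (nat -> C) -> Prop) :
  (forall t r, Q t r -> forall j, (j < t)%N -> r j = 0) ->
  (forall t r, Q t r -> exists w : nat -> C,
     Q t.+1 (fun P => r P - \sum_(i < K) sh_mul 0 (sh_mon t (w i)) (g i) P)) ->
  forall f, Q 0 f -> exists h : nat -> nat -> C,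
    f = fun P => \sum_(i < K) sh_mul 0 (h i) (g i) P.
Proof.
move=> Q_low Q_step f Qf.
pose corr t (w : nat -> C) P := \sum_(i < K) sh_mul 0 (sh_mon t (w i)) (g i) P.
have [W WP] : exists W : nat -> (nat -> C) -> nat -> C,
    forall t r, Q t r -> Q t.+1 (fun P => r P - corr t (W t r) P).
  apply: (choice (fun t Wt => forall r, Q t r -> Q t.+1 (fun P => r P - corr t (Wt r) P))).
  move=> t; apply: (choice (fun r w => Q t r -> Q t.+1 (fun P => r P - corr t w P))) => r.
  have [/Q_step[w Qw]|nQ] := classic (Q t r); first by exists w.
  by exists (fun=> 0) => /nQ.
pose fix R t := if t is t'.+1 then fun P => R t' P - corr t' (W t' (R t')) P else f.
have QR t : Q t (R t) by elim: t => //= t; apply: WP.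
exists (fun i t => W t (R t) i); apply: functional_extensionality => P.
have telescope T : f P = \sum_(t < T) corr t (W t (R t)) P + R T P.
  elim: T => [|T IH]; rewrite ?big_ord0 ?add0r // big_ord_recr IH /=.
  by rewrite -addrA [corr _ _ _ + _]addrC subrK.
rewrite (telescope P.+1) (Q_low _ _ (QR P.+1)) // addr0 exchange_big /=.
apply: eq_bigr => i _; rewrite sh_mul0E; apply: eq_bigr => t _.
by rewrite sh_mul0_monl -ltnS ltn_ord.
Qed.

(* Finite generation of [low_coefs I D] lets every correction step use the same
   finitely many elements [g i] of I. *)
Lemma low_coefs_stable_mem I J D : noetherian_ring C -> hat_ideal I -> hat_ideal J ->
  (forall a, I a -> J a) ->
  (forall d c, (D <= d)%N -> low_coefs J d c -> low_coefs I D c) ->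
  forall f, J f -> (forall j, (j < D)%N -> f j = 0) -> I f.
Proof.
move=> noeC idI idJ subIJ sub_low f Jf f0.
have [cs [csI cs_span]] := noetherian_ideal_fg noeC (low_coefs_ideal D idI).
have /choice[g gP] : forall i, exists a : nat -> C,
    [/\ I a, a D = cs`_i & forall j, (j < D)%N -> a j = 0].
  move=> i; suff [a aP] : low_coefs I D cs`_i by exists a.
  have [lt_i|le_i] := ltnP i (size cs); first exact/csI/mem_nth.
  by rewrite nth_default //; have [_ ? _ _ _] := low_coefs_ideal D idI.
have [_ _ Jadd Jopp _] := idJ; have [_ _ _ _ Imul] := idI.
have corrI t (w : nat -> C) : I (fun P => \sum_(i < size cs) sh_mul 0 (sh_mon t (w i)) (g i) P).
  by apply: sh_ideal_sum idI _ => i; apply: Imul; have [] := gP i.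
pose Q t r := J r /\ forall j, (j < D + t)%N -> r j = 0.
have Q_low t r : Q t r -> forall j, (j < t)%N -> r j = 0.
  by move=> [_ r0] j lt_jt; apply: r0; rewrite ltn_addl.
have Q_step t r : Q t r -> exists w : nat -> C, Q t.+1
    (fun P => r P - \sum_(i < size cs) sh_mul 0 (sh_mon t (w i)) (g i) P).
  move=> [Jr r0].
  have /(sub_low _ _ (leq_addr t D)) /cs_span [u ruE] : low_coefs J (D + t) (r (D + t)%N).
    by exists r.
  have [y yE] : exists y : C, 'C(D + t, t)%:R * y = 1.
    by apply: Q_algebra_natr_inv; rewrite // bin_gt0 leq_addl.
  exists (fun i => y * u i); split.
    by apply: (Jadd _ _ Jr); apply: Jopp; apply: subIJ; apply: (corrI t (fun i => y * u i)).
  move=> j; rewrite addnS ltnS leq_eqVlt => /orP[/eqP ->|lt_j]; last first.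
    rewrite r0 // big1 ?subrr // => i _; rewrite sh_mul0_monl; case: ifP => // le_tj.
    by have [_ _ ->] := gP i; rewrite ?mulr0 ?mul0r //; lia.
  rewrite ruE -sumrB big1 // => i _; rewrite sh_mul0_monl leq_addl addnK.
  have [_ -> _] := gP i.
  rewrite (_ : y * u i * _ * _ = u i * cs`_i * ('C(D + t, t)%:R * y)); last by ring.
  by rewrite yE mulr1 subrr.
have Qf : Q 0 f by split=> // j; rewrite addn0; apply: f0.
have [h ->] := sh_mul0_series Q_low Q_step Qf.
by apply: sh_ideal_sum idI _ => i; apply: Imul; have [] := gP i.
Qed.

Lemma sha_hat0_noetherian_of_Q : noetherian_ring C -> sha_hat_noetherian (0 : C).
Proof.
move=> noeC Is idIs incrIs.
have low_incr d n c : low_coefs (Is n) d c -> low_coefs (Is n.+1) d c.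
  by move=> [a [Ia ad a0]]; exists a; split=> //; apply: incrIs.
have [N [D [stab stabD]]] := noetherian_grid_stable noeC
  (fun d n => low_coefs_ideal d (idIs n)) (fun d n c => low_coefs_succ (idIs n)) low_incr.
exists N => n le_Nn f If.
have subI a : Is N a -> Is n a by apply: chain_le incrIs _ _ _ le_Nn.
have [g Ig fg] := low_approx (idIs N) (idIs n) subI (fun d c => stab n d c le_Nn) D If.
have [_ _ Jadd Jopp _] := idIs n.
apply: (sh_ideal_of_sub (idIs N) Ig).
apply: (low_coefs_stable_mem noeC (idIs N) (idIs n) subI) => [d c le_Dd||].
- by move/(stab n d c le_Nn)/(stabD d c le_Dd).
- exact: Jadd If (Jopp _ (subI _ Ig)).
- by move=> j /fg; rewrite /sh_add /sh_opp => ->; rewrite subrr.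
Qed.

End ShaHatNoetherian.

Theorem theorem3p1 (C : comPzRingType) :
  [/\ (noetherian_ring C -> is_Q_algebra C -> forall lam : C, sha_noetherian lam),
      (noetherian_ring C -> is_Q_algebra C -> sha_hat_noetherian (0 : C)),
      (forall lam : C, is_Q_algebra C ->
         (forall x : C, lam * x = 0 -> x = 0) ->
         (exists2 x : C, x != 0 & forall n : nat, exists y : C, x = lam ^+ n * y) ->
         ~ sha_hat_noetherian lam) &
      (~ is_Q_algebra C -> forall lam : C,
         ~ sha_noetherian lam /\ ~ sha_hat_noetherian lam)].
Proof.
split.
- by move=> noeC QC lam; apply: sha_noetherian_of_Q.
- by move=> noeC QC; apply: sha_hat0_noetherian_of_Q.
-
  by move=> lam _ _; apply: sha_hat_not_noetherian.
- by move=> notQ lam; apply: sha_not_noetherian.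
Qed.
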